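(* Let $\mathbf{A}\in\mathbb{R}^{n\times d}$, $\mathbf{B}\in\mathbb{R}^{n\times d_B}$, $\mathbf{C}\in\mathbb{R}^{n_C\times d}$, let $\mathbf{Y}=\mathrm{diag}(y_1,\dots,y_{d_B})$, $\mathbf{Z}=\mathrm{diag}(z_1,\dots,z_{n_C})$ with variables $y_i,z_j$, and let $k,r$ be integers with $0\le k\le\mathrm{rank}(\mathbf{B})$, $0\le r\le\mathrm{rank}(\mathbf{C})$. For any $S\subset[d_B]$ of size $k$ and $R\subset[n_C]$ of size $r$, $$\det[\mathbf{C}_{R,:}(\mathbf{C}_{R,:})^{\rm T}]\det[(\mathbf{B}_{:,S})^{\rm T}\mathbf{B}_{:,S}]\,p_{S,R}(xw;\mathbf{A},\mathbf{B},\mathbf{C})=(-1)^{k+r}x^r w^{d+k-n}\,\partial_{\mathbf{Y}^{S^C}}\partial_{\mathbf{Z}^{R^C}}H(x,w,\mathbf{Y},\mathbf{Z};\mathbf{A},\mathbf{B},\mathbf{C})\Big|_{y_i=0\,\forall i,\ z_j=0\,\forall j},$$ where $\partial_{\mathbf{Y}^{S^C}}=\prod_{i\in[d_B]\setminus S}\partial_{y_i}$ and $\partial_{\mathbf{Z}^{R^C}}=\prod_{j\in[n_C]\setminus R}\partial_{z_j}$.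
   Context: Notation: $\mathbf{M}_{R,S}$, $\mathbf{M}_{:,S}$, $\mathbf{M}_{R,:}$ are submatrices; $\mathbf{M}^\dagger$ Moore–Penrose pseudoinverse with $\mathbf{M}_{R,S}^\dagger:=(\mathbf{M}_{R,S})^\dagger$; empty determinants are $1$ and $\mathbf{M}_{:,\emptyset}\mathbf{M}_{:,\emptyset}^\dagger$, $\mathbf{M}_{\emptyset,:}^\dagger\mathbf{M}_{\emptyset,:}$ are zero. $\mathbf{Q}_S=\mathbf{I}_n-\mathbf{B}_{:,S}\mathbf{B}_{:,S}^\dagger$, $\mathbf{P}_R=\mathbf{I}_d-\mathbf{C}_{R,:}^\dagger\mathbf{C}_{R,:}$, $p_{S,R}(x;\mathbf{A},\mathbf{B},\mathbf{C})=\det[x\mathbf{I}_d-(\mathbf{Q}_S\mathbf{A}\mathbf{P}_R)^{\rm T}(\mathbf{Q}_S\mathbf{A}\mathbf{P}_R)]$. Define $$H(x,w,\mathbf{Y},\mathbf{Z};\mathbf{A},\mathbf{B},\mathbf{C})=\det\begin{pmatrix} w\mathbf{I}_n&\mathbf{0}&\mathbf{B}&\mathbf{A}\\ \mathbf{0}&\mathbf{Z}&\mathbf{0}&\mathbf{C}\\ \mathbf{B}^{\rm T}&\mathbf{0}&\mathbf{Y}&\mathbf{0}\\ \mathbf{A}^{\rm T}&\mathbf{C}^{\rm T}&\mathbf{0}&x\mathbf{I}_d\end{pmatrix}.$$ *)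

From Stdlib Require Import ClassicalEpsilon.
From mathcomp Require Import all_boot all_order all_algebra.
From mathcomp Require Import mpoly.
Set Implicit Arguments. Unset Strict Implicit. Unset Printing Implicit Defensive.
Import Order.TTheory GRing.Theory Num.Theory.
Local Open Scope ring_scope.

Section Defs.
Variable R : realFieldType.

Definition is_MP_pinv (m n : nat) (M : 'M[R]_(m, n)) (X : 'M[R]_(n, m)) : Prop :=
  [/\ M *m X *m M = M, X *m M *m X = X,
      (M *m X)^T = M *m X & (X *m M)^T = X *m M].

Definition mp_pinv (m n : nat) (M : 'M[R]_(m, n)) : 'M[R]_(n, m) :=
  epsilon (inhabits 0) (is_MP_pinv M).

(* Column submatrix M_{:,S}: columns of M indexed by S, in increasing order. *)
Definition colS (m n : nat) (M : 'M[R]_(m, n)) (S : {set 'I_n}) : 'M[R]_(m, #|S|) :=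
  colsub (fun i : 'I_#|S| => enum_val i) M.

(* Row submatrix M_{R,:}: rows of M indexed by T, in increasing order. *)
Definition rowS (m n : nat) (M : 'M[R]_(m, n)) (T : {set 'I_m}) : 'M[R]_(#|T|, n) :=
  rowsub (fun i : 'I_#|T| => enum_val i) M.

Definition Qmx (n dB : nat) (B : 'M[R]_(n, dB)) (S : {set 'I_dB}) : 'M[R]_n :=
  1%:M - colS B S *m mp_pinv (colS B S).

Definition Pmx (nC d : nat) (C : 'M[R]_(nC, d)) (T : {set 'I_nC}) : 'M[R]_d :=
  1%:M - mp_pinv (rowS C T) *m rowS C T.

Definition pSR (n d dB nC : nat) (A : 'M[R]_(n, d)) (B : 'M[R]_(n, dB))
    (C : 'M[R]_(nC, d)) (S : {set 'I_dB}) (T : {set 'I_nC}) (x : R) : R :=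
  let M := Qmx B S *m A *m Pmx C T in
  \det (x%:M - M^T *m M).

(* Polynomial ring in the variables y_1..y_dB, z_1..z_nC (indices dB + nC). *)
Definition yvar (dB nC : nat) (i : 'I_dB) : {mpoly R[dB + nC]} := 'X_(lshift nC i).
Definition zvar (dB nC : nat) (j : 'I_nC) : {mpoly R[dB + nC]} := 'X_(rshift dB j).

(* The block matrix whose determinant is H(x, w, Y, Z; A, B, C), with
   Y = diag(y_i), Z = diag(z_j), x and w real numbers. Block sizes are
   n, nC, dB, d (rows and columns). *)
Definition Hmx (n d dB nC : nat) (A : 'M[R]_(n, d)) (B : 'M[R]_(n, dB))
    (C : 'M[R]_(nC, d)) (x w : R) : 'M[{mpoly R[dB + nC]}]_(n + (nC + (dB + d))) :=
  let c := fun a : R => a%:MP_[dB + nC] in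
  let A' := map_mx c A in
  let B' := map_mx c B in
  let C' := map_mx c C in
  let Y := diag_mx (\row_i yvar nC i) in
  let Z := diag_mx (\row_j zvar dB j) in
  col_mx (row_mx (c w)%:M (row_mx 0 (row_mx B' A')))
 (col_mx (row_mx 0 (row_mx Z (row_mx 0 C')))
 (col_mx (row_mx B'^T (row_mx 0 (row_mx Y 0)))
         (row_mx A'^T (row_mx C'^T (row_mx 0 (c x)%:M))))).

Definition Hpoly (n d dB nC : nat) (A : 'M[R]_(n, d)) (B : 'M[R]_(n, dB))
    (C : 'M[R]_(nC, d)) (x w : R) : {mpoly R[dB + nC]} :=
  \det (Hmx A B C x w).

Definition mderivs (N : nat) (s : seq 'I_N) (p : {mpoly R[N]}) : {mpoly R[N]} :=
  foldr (fun i q => q^`M(i)) p s.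

End Defs.

(** Each variable y_i, z_j occurs in H exactly once, as a diagonal entry with
   coefficient 1.  Differentiating det H in it therefore replaces its row by a
   unit row; setting the remaining variables to 0 and deleting the unit rows and
   columns (Sylvester's identity det(1 + UV) = det(1 + VU)) leaves the bordered
   matrix [[[w I, A]; [A^T, x I]], V; V^T, 0] with V = diag(B_{:,S}, C_{R,:}^T).
   If V^T V is singular, a kernel vector of V^T V makes this matrix singular and
   the Gram determinant on the left vanishes as well.  Otherwise eliminating the
   border gives (-1)^(k+r) det(V^T V) det((I - Pi) X + Pi), with Pi the orthogonal
   projection onto the columns of V, i.e. diag(I - Q_S, I - P_R).  The Schur
   complement of its upper-left block w Q_S + (I - Q_S), whose inverse is
   w^-1 Q_S + (I - Q_S), together with det(t - UV) = det(t - VU) shows that x^r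
   times this determinant is w^(n-k-d) det(xw - (Q_S A P_R)^T (Q_S A P_R)). *)

From Stdlib Require Import ClassicalEpsilon.
From mathcomp Require Import all_boot all_order all_algebra.
From mathcomp Require Import mpoly.
From mathcomp Require Import ring.
Set Implicit Arguments. Unset Strict Implicit. Unset Printing Implicit Defensive.
Import Order.TTheory GRing.Theory Num.Theory.
Local Open Scope ring_scope.

Lemma Sylvester_det (R : comNzRingType) p q (U : 'M[R]_(p, q)) (V : 'M[R]_(q, p)) :
  \det (1%:M + U *m V) = \det (1%:M + V *m U).
Proof.
have lower : block_mx 1%:M (- U) V 1%:M
    = block_mx 1%:M 0 V 1%:M *m block_mx 1%:M (- U) 0 (1%:M + V *m U).
  rewrite mulmx_block !mul1mx ?mul0mx ?mulmx0 ?mulmx1 ?addr0 ?add0r.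
  by rewrite mulmxN addrCA addNr addr0.
have upper : block_mx 1%:M (- U) V 1%:M
    = block_mx (1%:M + U *m V) (- U) 0 1%:M *m block_mx 1%:M 0 V 1%:M.
  rewrite mulmx_block !mul1mx ?mul0mx ?mulmx0 ?mulmx1 ?addr0 ?add0r.
  by rewrite mulNmx addrK.
have := congr1 determinant lower; have := congr1 determinant upper.
rewrite !det_mulmx !det_lblock !det_ublock !det1 !mul1r !mulr1.
by move=> <- <-.
Qed.

Lemma det_oppmx (R : comNzRingType) n (A : 'M[R]_n) :
  \det (- A) = (-1) ^+ n * \det A.
Proof. by rewrite -scaleN1r detZ. Qed.

Section UnitRingDeterminants.
Variable R : comUnitRingType.

Lemma mulmx1_invmx n (A B : 'M[R]_n) : A *m B = 1%:M -> invmx A = B.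
Proof.
move=> AB; have [uA _] := mulmx1_unit AB.
by rewrite -[RHS](mulKmx uA) AB mulmx1.
Qed.

Lemma det_block_Schur m1 m2 (a : 'M[R]_m1) b c (d : 'M[R]_m2) : a \in unitmx ->
  \det (block_mx a b c d) = \det a * \det (d - c *m invmx a *m b).
Proof.
move=> ua.
have -> : block_mx a b c d = block_mx 1%:M 0 (c *m invmx a) 1%:M
    *m block_mx a b 0 (d - c *m invmx a *m b).
  rewrite mulmx_block !mul1mx ?mul0mx ?mulmx0 ?mulmx1 ?addr0 ?add0r.
  by rewrite -mulmxA mulVmx // mulmx1 addrCA addrN addr0.
by rewrite det_mulmx det_lblock det_ublock !det1 !mul1r.
Qed.

End UnitRingDeterminants.

Section FieldDeterminants.
Variable F : fieldType.

Lemma det_scalar_sub_mulmxC t n (U V : 'M[F]_n) :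
  \det (t%:M - U *m V) = \det (t%:M - V *m U).
Proof.
have [->|t0] := eqVneq t 0.
  by rewrite raddf0 !sub0r !det_oppmx !det_mulmx [\det U * _]mulrC.
have scale (M : 'M[F]_n) : t%:M - M = t *: (1%:M + (- t^-1) *: M).
  by rewrite scalerDr scalemx1 scalerA mulrN divff // scaleN1r.
by rewrite !scale !detZ scalemxAl Sylvester_det -scalemxAr.
Qed.

Lemma idempotent_mx_compl n (E : 'M[F]_n) : E *m E = E ->
  [/\ (1%:M - E) *m (1%:M - E) = 1%:M - E, (1%:M - E) *m E = 0
    & E *m (1%:M - E) = 0].
Proof.
move=> EE; have CE : (1%:M - E) *m E = 0 by rewrite mulmxBl mul1mx EE subrr.
have EC : E *m (1%:M - E) = 0 by rewrite mulmxBr mulmx1 EE subrr.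
by split=> //; rewrite mulmxBl EC mul1mx subr0.
Qed.

Definition projmx m k (V : 'M[F]_(m, k)) : 'M[F]_m :=
  V *m invmx (V^T *m V) *m V^T.

Section Projection.
Variables (m k : nat) (V : 'M[F]_(m, k)).
Hypothesis gramV : V^T *m V \in unitmx.
Local Notation Pi := (projmx V).

Lemma projmx_idem : Pi *m Pi = Pi.
Proof. by rewrite /projmx !mulmxA -(mulmxA _ V^T V) mulmxKV. Qed.

Lemma tr_projmx : Pi^T = Pi.
Proof.
by rewrite /projmx !trmx_mul trmxK trmx_inv trmx_mul trmxK mulmxA.
Qed.

Lemma det_projmx_comb a b : a != 0 ->
  \det (a *: (1%:M - Pi) + b *: Pi) = a ^+ m * (b / a) ^+ k.
Proof.
move=> a0.
have -> : a *: (1%:M - Pi) + b *: Pi = a *: (1%:M + (b / a - 1) *: Pi).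
  by apply/matrixP => i j; rewrite !mxE; field.
rewrite detZ /projmx -mulmxA scalemxAl Sylvester_det -scalemxAr -mulmxA.
by rewrite mulVmx // scalemx1 -raddfD /= det_scalar addrC subrK.
Qed.

Lemma mulmx_projmx_comb a b a' b' :
  (a *: (1%:M - Pi) + b *: Pi) *m (a' *: (1%:M - Pi) + b' *: Pi)
  = (a * a') *: (1%:M - Pi) + (b * b') *: Pi.
Proof.
have [CC CP PC] := idempotent_mx_compl projmx_idem.
rewrite mulmxDl !mulmxDr -!scalemxAl -!scalemxAr CC CP PC projmx_idem.
by rewrite !scaler0 addr0 add0r !scalerA.
Qed.

Lemma det_projmx_scale_sub y (J : 'M[F]_m) : (1%:M - Pi) *m J = J ->
  y ^+ k * \det (y *: (1%:M - Pi) + Pi - J) = \det (y%:M - J).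
Proof.
move=> CJ; have [_ _ PC] := idempotent_mx_compl projmx_idem.
have PJ : Pi *m J = 0 by rewrite -CJ mulmxA PC mul0mx.
have -> : y ^+ k = \det (1 *: (1%:M - Pi) + y *: Pi).
  by rewrite det_projmx_comb ?oner_neq0 // expr1n mul1r divr1.
rewrite -det_mulmx -[Pi in y *: _ + Pi]scale1r mulmxBr mulmx_projmx_comb //.
rewrite mulmxDl -!scalemxAl CJ PJ scaler0 addr0 mul1r mulr1 -scalerDr.
by rewrite subrK scalemx1 scale1r.
Qed.

End Projection.

Lemma det_bordered m k (X : 'M[F]_m) (V : 'M[F]_(m, k)) :
  V^T *m V \in unitmx ->
  \det (block_mx X V V^T 0)
    = (-1) ^+ k * \det (V^T *m V) * \det ((1%:M - projmx V) *m X + projmx V).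
Proof.
move=> uG; set G := V^T *m V; set Y := invmx G *m V^T *m (1%:M - X).
have XY : X + V *m Y = (1%:M - projmx V) *m X + projmx V.
  rewrite /Y /projmx -/G !mulmxA mulmxBr mulmx1 mulmxBl mul1mx.
  by rewrite addrCA addrC.
have right_mul : block_mx X V V^T 0 *m block_mx 1%:M 0 Y 1%:M
    = block_mx (X + V *m Y) V V^T 0.
  by rewrite mulmx_block ?mulmx1 ?mulmx0 ?mul0mx ?addr0 ?add0r.
have VXY : V^T *m (X + V *m Y) = V^T.
  rewrite mulmxDr /Y !mulmxA -/G mulmxV // mul1mx mulmxBr mulmx1.
  by rewrite addrCA addrN addr0.
have left_mul : block_mx 1%:M 0 (- V^T) 1%:M *m block_mx (X + V *m Y) V V^T 0
    = block_mx (X + V *m Y) V 0 (- G).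
  rewrite mulmx_block ?mul1mx ?mul0mx ?mulmx0 ?addr0 ?add0r mulNmx VXY.
  by rewrite addNr mulNmx.
have := congr1 determinant left_mul; rewrite det_mulmx det_lblock !det1 !mul1r.
rewrite det_ublock det_oppmx -right_mul det_mulmx det_lblock !det1 !mulr1 => ->.
by rewrite XY mulrC.
Qed.

End FieldDeterminants.


Section ProjectedBlock.
Variable F : fieldType.
Variables (n d k r : nat) (U1 : 'M[F]_(n, k)) (U2 : 'M[F]_(d, r)).
Hypotheses (gram1 : U1^T *m U1 \in unitmx) (gram2 : U2^T *m U2 \in unitmx).
Variables (A : 'M[F]_(n, d)) (x w : F).
Hypothesis w0 : w != 0.
Local Notation Q := (1%:M - projmx U1).
Local Notation P := (1%:M - projmx U2).
Local Notation J := (P *m A^T *m Q *m A).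

Lemma det_projected_block_Schur :
  \det (block_mx (w *: Q + projmx U1) (Q *m A) (P *m A^T) (x *: P + projmx U2))
  = w ^+ n * w^-1 ^+ k * \det (x *: P + projmx U2 - w^-1 *: J).
Proof.
have [QQ _ PQ] := idempotent_mx_compl (projmx_idem gram1).
rewrite -[X in w *: _ + X]scale1r.
have invZ : invmx (w *: Q + 1 *: projmx U1) = w^-1 *: Q + 1 *: projmx U1.
  apply: mulmx1_invmx; rewrite mulmx_projmx_comb // divff // mulr1.
  by rewrite !scale1r subrK.
rewrite det_block_Schur; last first.
  by rewrite unitmxE unitfE det_projmx_comb // mulf_neq0 ?expf_neq0 ?div1r ?invr_eq0.
rewrite det_projmx_comb // div1r invZ; congr (_ * \det (_ - _)).
rewrite -mulmxA [_ *m (Q *m A)]mulmxA (mulmxDl (w^-1 *: Q)) -!scalemxAl.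
rewrite QQ PQ scaler0 addr0.
by rewrite -scalemxAl -scalemxAr !mulmxA.
Qed.

Lemma det_gram_projected :
  \det ((x * w)%:M - (Q *m A *m P)^T *m (Q *m A *m P))
  = w ^+ d * \det (x%:M - w^-1 *: J).
Proof.
have [QQ _ _] := idempotent_mx_compl (projmx_idem gram1).
have [PP _ _] := idempotent_mx_compl (projmx_idem gram2).
have trQ : Q^T = Q by rewrite linearB /= trmx1 tr_projmx.
have trP : P^T = P by rewrite linearB /= trmx1 tr_projmx.
have -> : (Q *m A *m P)^T *m (Q *m A *m P) = J *m P.
  by rewrite !trmx_mul trQ trP !mulmxA -(mulmxA _ Q Q) QQ.
rewrite det_scalar_sub_mulmxC !mulmxA PP -detZ scalerBr scale_scalar_mx.
by rewrite scalerA divff // scale1r mulrC.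
Qed.

Lemma det_projected_block :
  x ^+ r * \det (block_mx (w *: Q + projmx U1) (Q *m A) (P *m A^T) (x *: P + projmx U2))
  = w ^+ n * w^-1 ^+ k * w^-1 ^+ d
    * \det ((x * w)%:M - (Q *m A *m P)^T *m (Q *m A *m P)).
Proof.
have [PP _ _] := idempotent_mx_compl (projmx_idem gram2).
have PJ : P *m (w^-1 *: J) = w^-1 *: J by rewrite -scalemxAr !mulmxA PP.
rewrite det_projected_block_Schur mulrCA det_projmx_scale_sub //.
rewrite det_gram_projected -!mulrA; congr (_ * (_ * _)).
by rewrite mulrA -exprMn mulVf // expr1n mul1r.
Qed.

End ProjectedBlock.

Section BlockDiagonalBorder.
Variable F : fieldType.
Variables (n d k r : nat) (U1 : 'M[F]_(n, k)) (U2 : 'M[F]_(d, r)).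
Local Notation V := (block_mx U1 0 0 U2).

Lemma gram_block_diag : V^T *m V = block_mx (U1^T *m U1) 0 0 (U2^T *m U2).
Proof.
by rewrite tr_block_mx !trmx0 mulmx_block !mulmx0 !mul0mx !addr0 !add0r.
Qed.

Hypotheses (gram1 : U1^T *m U1 \in unitmx) (gram2 : U2^T *m U2 \in unitmx).

Lemma projmx_block_diag : projmx V = block_mx (projmx U1) 0 0 (projmx U2).
Proof.
rewrite /projmx gram_block_diag invmx_block_diag ?block_diag_mx_unit ?gram1 ?gram2 //.
by rewrite tr_block_mx !trmx0 !mulmx_block !(mulmx0, mul0mx, addr0, add0r).
Qed.

Lemma det_bordered_block_diag (A : 'M[F]_(n, d)) x w : w != 0 ->
  let M := (1%:M - projmx U1) *m A *m (1%:M - projmx U2) in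
  x ^+ r * \det (block_mx (block_mx w%:M A A^T x%:M) V V^T 0)
  = (-1) ^+ (k + r) * \det (U1^T *m U1) * \det (U2^T *m U2)
    * (w ^+ n * w^-1 ^+ k * w^-1 ^+ d) * \det ((x * w)%:M - M^T *m M).
Proof.
move=> w0 M.
rewrite det_bordered ?gram_block_diag ?block_diag_mx_unit ?gram1 ?gram2 //.
rewrite det_ublock projmx_block_diag [1%:M](scalar_mx_block n d) opp_block_mx.
rewrite add_block_mx mulmx_block !(mulmx0, mul0mx, addr0, add0r) add_block_mx.
rewrite !(oppr0, mul0mx, addr0, add0r) !mul_mx_scalar mulrCA.
by rewrite det_projected_block // !mulrA.
Qed.

End BlockDiagonalBorder.

Section RealMatrices.
Variable R : realFieldType.

Lemma mp_pinvP m n (M : 'M[R]_(m, n)) X :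
  is_MP_pinv M X -> is_MP_pinv M (mp_pinv M).
Proof. by move=> MX; apply: epsilon_spec; exists X. Qed.

Lemma mp_pinv_full_col m k (V : 'M[R]_(m, k)) : V^T *m V \in unitmx ->
  mp_pinv V = invmx (V^T *m V) *m V^T.
Proof.
move=> uG; set G := V^T *m V.
have trG : G^T = G by rewrite /G trmx_mul trmxK.
have : is_MP_pinv V (invmx G *m V^T).
  split.
  - by rewrite -!mulmxA -/G mulVmx // mulmx1.
  - by rewrite !mulmxA -(mulmxA (invmx G)) -/G mulVmx // mul1mx.
  - by rewrite !trmx_mul trmxK trmx_inv trG mulmxA.
  - by rewrite -mulmxA -/G mulVmx // trmx1.
move=> /mp_pinvP [VXV _ trVX _].
have -> : V^T = G *m mp_pinv V by rewrite -{1}VXV trmx_mul trVX mulmxA.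
by rewrite mulmxA mulVmx // mul1mx.
Qed.

Lemma mp_pinv_full_row m k (V : 'M[R]_(k, m)) : V *m V^T \in unitmx ->
  mp_pinv V = V^T *m invmx (V *m V^T).
Proof.
move=> uK; set K := V *m V^T.
have trK : K^T = K by rewrite /K trmx_mul trmxK.
have : is_MP_pinv V (V^T *m invmx K).
  split.
  - by rewrite mulmxA -/K mulmxV // mul1mx.
  - by rewrite !mulmxA -(mulmxA _ V V^T) -/K mulmxK.
  - by rewrite mulmxA -/K mulmxV // trmx1.
  - by rewrite !trmx_mul trmxK trmx_inv trK mulmxA.
move=> /mp_pinvP [VXV _ _ trXV].
have VK : V = K *m (mp_pinv V)^T by rewrite -{1}VXV -mulmxA -trXV trmx_mul mulmxA.
by rewrite -[mp_pinv V]trmxK -[(mp_pinv V)^T](mulKmx uK) -VK trmx_mul trmx_inv trK.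
Qed.

Lemma Qmx_projmx n dB (B : 'M[R]_(n, dB)) S :
  (colS B S)^T *m colS B S \in unitmx -> Qmx B S = 1%:M - projmx (colS B S).
Proof. by move=> uG; rewrite /Qmx mp_pinv_full_col // mulmxA. Qed.

Lemma Pmx_projmx nC d (C : 'M[R]_(nC, d)) T :
  rowS C T *m (rowS C T)^T \in unitmx -> Pmx C T = 1%:M - projmx (rowS C T)^T.
Proof. by move=> uK; rewrite /Pmx mp_pinv_full_row // /projmx trmxK. Qed.

Lemma rv_mul_tr_eq0 m (u : 'rV[R]_m) : u *m u^T = 0 -> u = 0.
Proof.
move/(congr1 (fun M : 'M_1 => M 0 0)); rewrite !mxE => sum_sq0.
have sq_ge0 j : true -> 0 <= u 0 j * u^T j 0 by rewrite mxE -expr2 sqr_ge0.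
apply/rowP => i; have := @psumr_eq0P _ _ _ _ sq_ge0 sum_sq0 i isT.
by rewrite !mxE -expr2 => /eqP; rewrite sqrf_eq0 => /eqP.
Qed.

Lemma mulmx_gram_eq0 m k (v : 'rV[R]_k) (V : 'M[R]_(m, k)) :
  v *m (V^T *m V) = 0 -> v *m V^T = 0.
Proof.
by move=> vG; apply: rv_mul_tr_eq0; rewrite trmx_mul trmxK mulmxA -(mulmxA v) vG mul0mx.
Qed.

Lemma det_bordered_eq0 m k (X : 'M[R]_m) (V : 'M[R]_(m, k)) :
  V^T *m V \notin unitmx -> \det (block_mx X V V^T 0) = 0.
Proof.
rewrite unitmxE unitfE negbK => /det0P [v v0 vG]; apply/eqP/det0P.
exists (row_mx 0 v); first by rewrite row_mx_eq0 (negbTE v0) andbF.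
by rewrite mul_row_block (mulmx_gram_eq0 vG) !(mul0mx, mulmx0, addr0) row_mx0.
Qed.

End RealMatrices.

(* The submatrix of H at Y = Z = 0 on the rows and columns that survive the
   differentiation, see [Hsel_Hmx0]. *)
Definition Hminor (R : realFieldType) n d dB nC (A : 'M[R]_(n, d))
    (B : 'M[R]_(n, dB)) (C : 'M[R]_(nC, d)) (S : {set 'I_dB}) (T : {set 'I_nC})
    (x w : R) : 'M[R]_((n + d) + (#|S| + #|T|)) :=
  let V := block_mx (colS B S) 0 0 (rowS C T)^T in
  block_mx (block_mx w%:M A A^T x%:M) V V^T 0.

Lemma det_Hminor_pSR (R : realFieldType) n d dB nC (A : 'M[R]_(n, d))
    (B : 'M[R]_(n, dB)) (C : 'M[R]_(nC, d)) (S : {set 'I_dB}) (T : {set 'I_nC})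
    (x w : R) : w != 0 ->
  (-1) ^+ (#|S| + #|T|) * x ^+ #|T| * w ^ (d%:Z + #|S|%:Z - n%:Z)
    * \det (Hminor A B C S T x w)
  = \det (rowS C T *m (rowS C T)^T) * \det ((colS B S)^T *m colS B S)
    * pSR A B C S T (x * w).
Proof.
rewrite /Hminor => w0; set G := (colS B S)^T *m colS B S; set K := rowS C T *m (rowS C T)^T.
have trK : ((rowS C T)^T)^T *m (rowS C T)^T = K by rewrite trmxK.
have [/andP [uG uK] | degenerate] := boolP ((G \in unitmx) && (K \in unitmx)).
  have uK' : ((rowS C T)^T)^T *m (rowS C T)^T \in unitmx by rewrite trK.
  have := det_bordered_block_diag uG uK' A x w0.
  rewrite trK /pSR Qmx_projmx // Pmx_projmx //.
  set D := \det (block_mx _ _ _ _) => bordered.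
  have sign2 : (-1) ^+ (#|S| + #|T|) * (-1) ^+ (#|S| + #|T|) = 1 :> R.
    by rewrite -exprMn mulN1r opprK expr1n.
  have powers : w ^ (d%:Z + #|S|%:Z - n%:Z) * (w ^+ n * w^-1 ^+ #|S| * w^-1 ^+ d) = 1.
    rewrite !expfzDr // -exprnN !exprVn.
    rewrite [w ^ (d%:Z)]/(w ^+ d) [w ^ (#|S|%:Z)]/(w ^+ #|S|).
    by rewrite !mulrA mulfVK ?expf_neq0 // mulfK ?expf_neq0 // mulfV ?expf_neq0.
  rewrite -/G in bordered; set p := \det ((x * w)%:M - _) in bordered *.
  transitivity ((-1) ^+ (#|S| + #|T|) * w ^ (d%:Z + #|S|%:Z - n%:Z) * (x ^+ #|T| * D)).
    by ring.
  rewrite bordered; set W := _ * w^-1 ^+ d in powers *.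
  transitivity ((-1) ^+ (#|S| + #|T|) * (-1) ^+ (#|S| + #|T|)
    * (w ^ (d%:Z + #|S|%:Z - n%:Z) * W) * (\det K * \det G * p)).
    by ring.
  by rewrite sign2 powers !mul1r.
rewrite det_bordered_eq0 ?mulr0; last first.
  by rewrite gram_block_diag block_diag_mx_unit trK.
by move: degenerate; rewrite negb_and !unitmxE !unitfE !negbK => /orP [] /eqP ->;
  rewrite ?mulr0 ?mul0r.
Qed.

Definition set_unit_rows (R : nzRingType) m (s : seq 'I_m) (M : 'M[R]_m) : 'M[R]_m :=
  \matrix_(i, j) if i \in s then (i == j)%:R else M i j.

Lemma map_set_unit_rows (R R' : nzRingType) (f : {rmorphism R -> R'}) m
    (s : seq 'I_m) (M : 'M[R]_m) :
  map_mx f (set_unit_rows s M) = set_unit_rows s (map_mx f M).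
Proof. by apply/matrixP => i j; rewrite !mxE; case: ifP; rewrite ?rmorph_nat. Qed.

Lemma det_set_unit_rows_compress (R : comNzRingType) m N (s : seq 'I_N)
    (H : 'M[R]_N) (J : 'M[R]_(N, m)) :
  J^T *m J = 1%:M -> J *m J^T = diag_mx (\row_i (i \notin s)%:R) ->
  \det (set_unit_rows s H) = \det (J^T *m H *m J).
Proof.
move=> JtJ JJt.
have -> : set_unit_rows s H = 1%:M + J *m (J^T *m (H - 1%:M)).
  rewrite mulmxA JJt mul_diag_mx; apply/matrixP => i j; rewrite !mxE.
  by case: (i \in s); rewrite ?mul0r ?addr0 // mul1r addrCA subrr addr0.
by rewrite Sylvester_det mulmxBr mulmx1 mulmxBl JtJ addrC subrK.
Qed.

Section DeterminantDerivatives.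
Variables (R : comNzRingType) (K : nat).
Local Notation P := {mpoly R[K]}.

Lemma mderivXU (i j : 'I_K) : ('X_j : P)^`M(i) = (j == i)%:R.
Proof.
rewrite mderivX mnm1E; case: eqP => [->|_]; last by rewrite scale0r.
have -> : (U_(i) - U_(i))%MM = 0%MM.
  by apply/mnmP => l; rewrite mnmBE subnn mnm0E.
by rewrite mpolyX0 scale1r.
Qed.

Lemma mderiv_nat v (m : nat) : ((m%:R : P))^`M(v) = 0.
Proof. by rewrite -mpolyC_nat mderivC. Qed.

Lemma mderiv_sign v (m : nat) : (((-1) ^+ m : P))^`M(v) = 0.
Proof.
have -> : ((-1) ^+ m : P) = ((-1) ^+ m)%:MP by rewrite rmorphXn rmorphN1.
exact: mderivC.
Qed.

Lemma mderiv_det_const m (M : 'M[P]_m) v :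
  (forall i j, (M i j)^`M(v) = 0) -> (\det M)^`M(v) = 0.
Proof.
move=> Mv; rewrite /determinant.
elim/big_ind: _ => [|p q pv qv|s _]; first exact: mderiv0.
  by rewrite mderivD pv qv addr0.
rewrite mderivM mderiv_sign mul0r add0r [X in _ * X](_ : _ = 0) ?mulr0 //.
elim/big_ind: _ => [|p q pv qv|i _]; last exact: Mv.
  by rewrite -mpolyC1 mderivC.
by rewrite mderivM pv qv mul0r mulr0 addr0.
Qed.

Lemma mderiv_det_unit_row m (M : 'M[P]_m) p v :
  (forall i j, i != p -> (M i j)^`M(v) = 0) ->
  (forall j, (M p j)^`M(v) = (j == p)%:R) ->
  (\det M)^`M(v) = \det (set_unit_rows [:: p] M).
Proof.
move=> Mv Mpv; rewrite (expand_det_row M p) (expand_det_row (set_unit_rows _ M) p).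
rewrite raddf_sum /=; apply: eq_bigr => j _.
(* Laplace expansion along row [p]: the cofactors do not involve [v]. *)
have -> : cofactor (set_unit_rows [:: p] M) p j = cofactor M p j.
  rewrite /cofactor; congr (_ * \det _); apply/matrixP => a b.
  by rewrite !mxE inE eq_sym (negbTE (neq_lift _ _)).
rewrite mderivM Mpv !mxE inE !eqxx eq_sym.
rewrite [(cofactor M p j)^`M(v)](_ : _ = 0) ?mulr0 ?addr0 //.
rewrite /cofactor mderivM mderiv_sign mul0r add0r mderiv_det_const ?mulr0 //.
by move=> a b; rewrite !mxE Mv // eq_sym neq_lift.
Qed.

End DeterminantDerivatives.

Lemma mderivs_det (R : realFieldType) K m (M : 'M[{mpoly R[K]}]_m)
    (pos : 'I_K -> 'I_m) (s : seq 'I_K) :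
  injective pos -> uniq s ->
  (forall i j u, (M i j)^`M(u) = ((i == pos u) && (j == pos u))%:R) ->
  mderivs s (\det M) = \det (set_unit_rows (map pos s) M).
Proof.
move=> pos_inj; elim: s => [|u s IH] /= us Mv.
  by congr (\det _); apply/matrixP => i j; rewrite mxE.
case/andP: us => us1 us2; rewrite IH // (mderiv_det_unit_row (p := pos u)).
- congr (\det _); apply/matrixP => i j; rewrite !mxE !inE.
  by case: eqP => [->|].
- move=> i j ni; rewrite mxE; case: ifP => _; first exact: mderiv_nat.
  by rewrite Mv (negbTE ni).
- by move=> j; rewrite mxE mem_map // (negbTE us1) Mv eqxx.
Qed.

Lemma split_lshift m n (i : 'I_m) : split (lshift n i) = inl i.
Proof. exact: (unsplitK (inl i)). Qed.

Lemma split_rshift m n (i : 'I_n) : split (rshift m i) = inr i.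
Proof. exact: (unsplitK (inr i)). Qed.

Ltac unfold_blocks :=
  do ![progress rewrite ?mxE ?split_lshift ?split_rshift ?eq_shift
         ?mderivXU ?mderiv0 ?mevalXU ?meval0 /=
      | case: split_ordP => ? e; subst].

Section Selection.
Variable R : realFieldType.

Definition colsel m (S : {set 'I_m}) : 'M[R]_(m, #|S|) := colS 1%:M S.

Lemma tr_colsel_mul m (S : {set 'I_m}) : (colsel S)^T *m colsel S = 1%:M.
Proof.
apply/matrixP => a b; rewrite !mxE (bigD1 (enum_val a)) //= big1.
  by rewrite !mxE eqxx mul1r addr0 (inj_eq enum_val_inj).
by move=> i ne; rewrite !mxE (negbTE ne) mul0r.
Qed.

Lemma colsel_mul_tr m (S : {set 'I_m}) :
  colsel S *m (colsel S)^T = diag_mx (\row_i (i \in S)%:R).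
Proof.
apply/matrixP => a b; rewrite !mxE.
case: (boolP (a \in S)) => aS.
  rewrite (bigD1 (enum_rank_in aS a)) //= big1.
    by rewrite !mxE enum_rankK_in // eqxx mul1r addr0 eq_sym mulr1n.
  move=> l ne; rewrite !mxE; case: eqP => [ea|]; last by rewrite mul0r.
  by case/eqP: ne; apply: enum_val_inj; rewrite enum_rankK_in.
rewrite big1 ?mul0rn // => l _; rewrite !mxE.
case: eqP => [ea|]; last by rewrite mul0r.
by move: aS; rewrite ea enum_valP.
Qed.

Lemma colS_colsel m k (B : 'M[R]_(k, m)) (S : {set 'I_m}) :
  colS B S = B *m colsel S.
Proof. by rewrite /colsel /colS mulmx_colsub mulmx1. Qed.

Lemma rowS_colsel m k (C : 'M[R]_(m, k)) (T : {set 'I_m}) :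
  rowS C T = (colsel T)^T *m C.
Proof.
rewrite /rowS rowsubE; congr (_ *m _); apply/matrixP => i j.
by rewrite !mxE eq_sym.
Qed.

End Selection.

Lemma map_mx_add_diag_mxE (R R' : nzRingType) (f : R -> R') m (M : 'M[R]_m)
    (v : 'rV[R']_m) a b :
  (map_mx f M + diag_mx v) a b = f (M a b) + v 0 a *+ (a == b).
Proof. by rewrite !mxE. Qed.

Section HMatrix.
Variable R : realFieldType.
Variables (n d dB nC : nat).
Variables (A : 'M[R]_(n, d)) (B : 'M[R]_(n, dB)) (C : 'M[R]_(nC, d)) (x w : R).
Variables (S : {set 'I_dB}) (T : {set 'I_nC}).
Local Notation N := (n + (nC + (dB + d)))%N.
Local Notation P := {mpoly R[dB + nC]}.

Definition Hmx0 : 'M[R]_N :=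
  col_mx (row_mx w%:M (row_mx 0 (row_mx B A)))
 (col_mx (row_mx 0 (row_mx 0 (row_mx 0 C)))
 (col_mx (row_mx B^T (row_mx 0 (row_mx 0 0)))
         (row_mx A^T (row_mx C^T (row_mx 0 x%:M))))).

Definition Hvars : 'rV[P]_N :=
  row_mx 0 (row_mx (\row_j zvar R dB j) (row_mx (\row_i yvar R nC i) 0)).

Lemma Hmx_decomp : Hmx A B C x w = map_mx (fun a => a%:MP) Hmx0 + diag_mx Hvars.
Proof.
apply/matrixP => a b; rewrite /Hmx /Hmx0 /Hvars !mxE.
do ![case: split_ordP => ? -> /=; rewrite ?mxE];
  by rewrite ?eq_shift ?mulr0n ?mul0rn ?mpolyC0 ?addr0 ?add0r ?raddfMn.
Qed.

Definition var_pos (u : 'I_(dB + nC)) : 'I_N :=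
  match split u with
  | inl i => rshift n (rshift nC (lshift d i))
  | inr j => rshift n (lshift (dB + d) j)
  end.

Lemma var_pos_lshift i : var_pos (lshift nC i) = rshift n (rshift nC (lshift d i)).
Proof. by rewrite /var_pos split_lshift. Qed.

Lemma var_pos_rshift j : var_pos (rshift dB j) = rshift n (lshift (dB + d) j).
Proof. by rewrite /var_pos split_rshift. Qed.

Lemma var_pos_inj : injective var_pos.
Proof.
move=> u v; case: (split_ordP u) => i ->; case: (split_ordP v) => j ->;
  rewrite ?var_pos_lshift ?var_pos_rshift => /eqP; rewrite !eq_shift //.
all: by move/eqP->.
Qed.

Lemma Hmx_mderiv a b u :
  ((Hmx A B C x w) a b)^`M(u) = ((a == var_pos u) && (b == var_pos u))%:R.
Proof.
have Hvars_mderiv : (Hvars 0 a)^`M(u) = (a == var_pos u)%:R.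
  by rewrite /Hvars /var_pos /yvar /zvar; unfold_blocks.
rewrite Hmx_decomp map_mx_add_diag_mxE mderivD mderivC mderivMn Hvars_mderiv add0r.
case: (eqVneq a b) => [<-|ab]; first by rewrite andbb mulr1n.
rewrite mulr0n; case: eqP => // ea; case: eqP => // eb.
by rewrite ea eb eqxx in ab.
Qed.

Lemma Hmx_eval : map_mx (meval (fun _ => 0)) (Hmx A B C x w) = Hmx0.
Proof.
have Hvars_eval a : (Hvars 0 a).@[fun _ => 0] = 0.
  by rewrite /Hvars /yvar /zvar; unfold_blocks.
apply/matrixP => a b.
by rewrite [LHS]mxE Hmx_decomp map_mx_add_diag_mxE mevalD mevalC mevalMn Hvars_eval mul0rn addr0.
Qed.

End HMatrix.

Section HMinor.
Variable R : realFieldType.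
Variables (n d dB nC : nat).
Variables (A : 'M[R]_(n, d)) (B : 'M[R]_(n, dB)) (C : 'M[R]_(nC, d)) (x w : R).
Variables (S : {set 'I_dB}) (T : {set 'I_nC}).
Local Notation N := (n + (nC + (dB + d)))%N.
Local Notation var_pos := (@var_pos n d dB nC).
Local Notation var_pos_inj := (@var_pos_inj n d dB nC).

Definition diff_vars : seq 'I_(dB + nC) :=
  [seq lshift nC i | i in ~: S] ++ [seq rshift dB j | j in ~: T].

Lemma uniq_diff_vars : uniq diff_vars.
Proof.
rewrite cat_uniq (map_inj_uniq (@lshift_inj _ _)) ?enum_uniq //.
rewrite (map_inj_uniq (@rshift_inj _ _)) ?enum_uniq // andbT.
apply/hasPn => u /mapP [j _ ->]; apply/mapP => [[i _ /eqP]].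
by rewrite eq_rlshift.
Qed.

Definition Hsel : 'M[R]_(N, (n + d) + (#|S| + #|T|)) :=
  row_mx (row_mx (col_mx 1%:M 0) (col_mx 0 (col_mx 0 (col_mx 0 1%:M))))
         (row_mx (col_mx 0 (col_mx 0 (col_mx (colsel R S) 0)))
                 (col_mx 0 (col_mx (colsel R T) 0))).

Lemma Hsel_Hmx0 : Hsel^T *m Hmx0 A B C x w *m Hsel = Hminor A B C S T x w.
Proof.
rewrite /Hminor colS_colsel rowS_colsel /Hsel /Hmx0.
rewrite !(tr_row_mx, tr_col_mx, trmx0, trmx1, trmx_mul, trmxK, tr_block_mx).
rewrite !(mul_col_mx, mul_mx_row, mul_row_col, mul0mx, mulmx0, mul1mx, mulmx1,
  addr0, add0r, add_row_mx, row_mx0).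
by apply/matrixP => i j; unfold_blocks.
Qed.

Lemma tr_Hsel_mul : Hsel^T *m Hsel = 1%:M.
Proof.
rewrite /Hsel !(tr_row_mx, tr_col_mx, trmx0, trmx1, trmx_mul, trmxK, tr_block_mx).
rewrite !(mul_col_mx, mul_mx_row, mul_row_col, mul0mx, mulmx0, mul1mx, mulmx1,
  addr0, add0r, add_row_mx, row_mx0, tr_colsel_mul).
by apply/matrixP => i j; unfold_blocks.
Qed.

Lemma mem_diff_vars_lshift i : (lshift nC i \in diff_vars) = (i \notin S).
Proof.
rewrite mem_cat (mem_map (@lshift_inj _ _)) mem_enum in_setC.
case: (boolP (_ \in [seq _ | _ in _])) => [|_]; last by rewrite orbF.
by case/mapP => j _ /eqP; rewrite eq_lrshift.
Qed.

Lemma mem_diff_vars_rshift j : (rshift dB j \in diff_vars) = (j \notin T).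
Proof.
rewrite mem_cat (mem_map (@rshift_inj _ _)) mem_enum in_setC.
case: (boolP (_ \in [seq _ | _ in _])) => //.
by case/mapP => i _ /eqP; rewrite eq_rlshift.
Qed.

Lemma kept_rows_indicator :
  \row_a (a \notin map var_pos diff_vars)%:R
  = row_mx (const_mx 1) (row_mx (\row_j (j \in T)%:R)
      (row_mx (\row_i (i \in S)%:R) (const_mx 1))) :> 'rV[R]_N.
Proof.
have notin a : (forall u, var_pos u != a) -> a \notin map var_pos diff_vars.
  by move=> ua; apply/mapP => [[u _ au]]; move: (ua u); rewrite au eqxx.
apply/rowP => a; rewrite mxE; case: (split_ordP a) => a1 ->.
  rewrite mxE split_lshift mxE notin // => u.
  by case: (split_ordP u) => ? ->; rewrite ?var_pos_lshift ?var_pos_rshift eq_shift.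
rewrite mxE split_rshift; case: (split_ordP a1) => a2 ->.
  rewrite mxE split_lshift mxE -var_pos_rshift (mem_map var_pos_inj).
  by rewrite mem_diff_vars_rshift negbK.
rewrite mxE split_rshift; case: (split_ordP a2) => a3 ->.
  rewrite mxE split_lshift mxE -var_pos_lshift (mem_map var_pos_inj).
  by rewrite mem_diff_vars_lshift negbK.
rewrite mxE split_rshift mxE notin // => u.
by case: (split_ordP u) => ? ->; rewrite ?var_pos_lshift ?var_pos_rshift !eq_shift.
Qed.

Lemma Hsel_mul_tr :
  Hsel *m Hsel^T = diag_mx (\row_a (a \notin map var_pos diff_vars)%:R).
Proof.
rewrite kept_rows_indicator /Hsel.
rewrite !(tr_row_mx, tr_col_mx, trmx0, trmx1, trmx_mul, trmxK, tr_block_mx).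
rewrite !(mul_col_mx, mul_mx_row, mul_row_col, mul0mx, mulmx0, mul1mx, mulmx1,
  addr0, add0r, add_row_mx, add_col_mx, row_mx0, col_mx0, colsel_mul_tr).
by apply/matrixP => i j; unfold_blocks.
Qed.

Lemma mderivs_Hpoly_eval :
  (mderivs [seq lshift nC i | i in ~: S]
     (mderivs [seq rshift dB j | j in ~: T] (Hpoly A B C x w))).@[fun _ => 0]
  = \det (Hminor A B C S T x w).
Proof.
rewrite /mderivs -foldr_cat -/(mderivs diff_vars _) /Hpoly.
rewrite (mderivs_det var_pos_inj uniq_diff_vars (@Hmx_mderiv _ _ _ _ _ A B C x w)).
rewrite -det_map_mx map_set_unit_rows Hmx_eval.
by rewrite (det_set_unit_rows_compress _ tr_Hsel_mul Hsel_mul_tr) Hsel_Hmx0.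
Qed.

End HMinor.

Unset Implicit Arguments.
Theorem proposition3p2 (R : realFieldType) (n d dB nC : nat)
    (A : 'M[R]_(n, d)) (B : 'M[R]_(n, dB)) (C : 'M[R]_(nC, d))
    (k r : nat) (hk : (k <= \rank B)%N) (hr : (r <= \rank C)%N)
    (S : {set 'I_dB}) (T : {set 'I_nC})
    (hS : #|S| = k) (hT : #|T| = r) (x w : R) (hw : w != 0) :
  \det (rowS C T *m (rowS C T)^T) * \det ((colS B S)^T *m colS B S)
    * pSR A B C S T (x * w)
  = (-1) ^+ (k + r) * x ^+ r * w ^ (d%:Z + k%:Z - n%:Z)
    * (mderivs [seq lshift nC i | i in ~: S]
        (mderivs [seq rshift dB j | j in ~: T] (Hpoly A B C x w))).@[fun _ => 0].
Proof.
subst k r.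
by rewrite (mderivs_Hpoly_eval A B C x w S T) (det_Hminor_pSR A B C S T x hw).
Qed.
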